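(* Let $\nu \geq 1$, let $\Psi \neq \emptyset$ be a set, let $n\in\mathbb N$ and let $W_1,\dots,W_n:\Omega \to \ell^\infty(\Psi)$ be arbitrary (not necessarily measurable) maps on a probability space $(\Omega,\Upsilon,P)$. For $1\le i\le j\le n$ and $\psi\in\Psi$ put $S_{i,j}^W(\psi)=\sum_{k=i}^j W_k(\psi)$ and $M_{i,j}^W(\psi)=\max_{k=i,\dots,j}|S_{i,k}^W(\psi)|$. Let $\alpha>1$ and let $g:\mathbb N\to\mathbb R$ be such that the pair $(\alpha,g)$ fulfills condition (S) with some index $Q\in[1,2^{(\alpha-1)/\alpha})$. Suppose that for all $1\le i\le j\le n$, $$\mathrm E^*\Big\{\sup_{\psi\in\Psi}|S_{i,j}^W(\psi)|^\nu\Big\}\le g^{\alpha}(j-i+1).$$ Then there exists a constant $A$ depending only on $\alpha,\nu$ and $Q$ such that for all $1\le i\le j\le n$, $$\mathrm E^*\Big\{\sup_{\psi\in\Psi}|M_{i,j}^W(\psi)|^\nu\Big\}\le A\, g^{\alpha}(j-i+1).$$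
   Context: $\ell^\infty(\Psi)$ is the space of bounded real functions on $\Psi$ with the sup norm. $\mathrm E^*$ denotes outer expectation: for an arbitrary map $Y:\Omega\to\mathbb R$, $\mathrm E^*\{Y\}=\inf\{\mathrm E\{U\}: U\ge Y,\ U:\Omega\to[-\infty,\infty] \text{ measurable},\ \mathrm E\{U\}\text{ exists}\}$. Condition (S): for $\alpha>1$ and $g:\mathbb N\to\mathbb R$, the pair $(\alpha,g)$ fulfills condition (S) with index $Q\in[1,2^{(\alpha-1)/\alpha})$ if (i) $g\ge 0$, (ii) $g$ is nondecreasing, and (iii) for each $1\le i<j$, $g(i)+g(j-i)\le Q\,g(j)$. *)

From HB Require Import structures.
From mathcomp Require Import all_boot all_order all_algebra.
From mathcomp Require Import all_classical all_reals all_analysis measurable_realfun.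
Set Implicit Arguments. Unset Strict Implicit. Unset Printing Implicit Defensive.
Import Order.TTheory GRing.Theory Num.Theory.
Local Open Scope classical_set_scope.
Local Open Scope ring_scope.

(* Outer expectation E^* {Y} = inf { E U : U >= Y, U measurable into [-oo,oo],
   E U exists (not both E U^+ and E U^- infinite) }. *)
Definition outer_expectation {d} {T : measurableType d} {R : realType}
  (P : probability T R) (Y : T -> R) : \bar R :=
  ereal_inf [set (\int[P]_x U x)%E | U in
    [set U : T -> \bar R | measurable_fun [set: T] U
       /\ (forall x, (Y x)%:E <= U x)%E
       /\ ((\int[P]_x (U^\+ x) < +oo)%E \/ (\int[P]_x (U^\- x) < +oo)%E)]].

(* Condition (S) for (alpha, g) with index Q; g is indexed by N = {1,2,...}. *)
Definition condS {R : realType} (alpha : R) (g : nat -> R) (Q : R) : Prop :=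
  [/\ 1 <= Q /\ Q < 2 `^ ((alpha - 1) / alpha),
      (forall k, (1 <= k)%N -> 0 <= g k),
      (forall k l, (1 <= k <= l)%N -> g k <= g l) &
      (forall i j, (1 <= i < j)%N -> g i + g (j - i)%N <= Q * g j)].

Definition Ssum {R : realType} {T Psi : Type} (W : nat -> T -> Psi -> R)
  (i j : nat) (w : T) (psi : Psi) : R :=
  \sum_(i <= k < j.+1) W k w psi.

Definition Mmax {R : realType} {T Psi : Type} (W : nat -> T -> Psi -> R)
  (i j : nat) (w : T) (psi : Psi) : R :=
  \big[Num.max/0]_(i <= k < j.+1) `|Ssum W i k w psi|.

Definition supnorm_pow {R : realType} {Psi : Type} (F : Psi -> R) (nu : R) : R :=
  sup [set `|F psi| `^ nu | psi in [set: Psi]].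

From HB Require Import structures.
From mathcomp Require Import all_boot all_order all_algebra.
From mathcomp Require Import all_classical all_reals all_analysis measurable_realfun.
From mathcomp Require Import lra zify.
Set Implicit Arguments.
Unset Strict Implicit.
Unset Printing Implicit Defensive.
Import Order.TTheory GRing.Theory Num.Theory.
Local Open Scope classical_set_scope.
Local Open Scope ring_scope.

(* Strong induction on the block length L = j - i + 1.  Cut the block at an
   m with g^a(m - i) <= g^a(L)/2 < g^a(m - i + 1), or at m = j (a = alpha);
   pointwise M_{i,j} <= |S_{i,m}| + max (M_{i,m-1}, M_{m+1,j}), and convexity of x^nu
   gives (x + y)^nu <= (1-mu)^(1-nu) x^nu + mu^(1-nu) y^nu for 0 < mu < 1.
   With s = 2^(-1/a), the cut gives g(m - i + 1) > s g(L), so condition (S)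
   leaves g(j - m) <= (Q - s) g(L); the two maximal blocks thus cost at most
   A theta g^a(L), where theta = 1/2 + (Q - s)^a < 1 exactly because
   Q < 2^((a-1)/a) = 2 s.  Taking mu = theta^(1/nu) and A = (1-mu)^(-nu) closes
   the induction, since outer expectation is monotone, subadditive and
   positively homogeneous on nonnegative maps. *)

Lemma powR_inv (R : realType) (t p : R) : 0 <= t -> (t^-1) `^ p = (t `^ p)^-1.
Proof. by move=> t0; rewrite -powR_inv1 // -powRrM mulN1r powRN. Qed.

Lemma powR_add_le_weighted (R : realType) (p t x y : R) : 1 <= p -> 0 < t -> t < 1 ->
  0 <= x -> 0 <= y ->
  (x + y) `^ p <= (1 - t) / (1 - t) `^ p * x `^ p + t / t `^ p * y `^ p.
Proof.
move=> p1 t0 t1 x0 y0; have t'0 : 0 < 1 - t by rewrite subr_gt0.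
have t'1 : 1 - t <= 1 by rewrite gerBl ltW.
have x'0 := divr_ge0 x0 (ltW t'0); have y'0 := divr_ge0 y0 (ltW t0).
have : ((1 - t) * (x / (1 - t)) + (1 - (1 - t)) * (y / t)) `^ p <=
    (1 - t) * (x / (1 - t)) `^ p + (1 - (1 - t)) * (y / t) `^ p.
  have := @convex_powR R p p1 (Itv01 (ltW t'0) t'1) (x / (1 - t)) (y / t).
  by rewrite !inE /= !in_itv /= !andbT => /(_ x'0 y'0).
rewrite opprB addrCA subrr addr0 !(mulrC _ (_ / _)) !divfK ?gt_eqF //.
move=> /le_trans; apply; apply: lerD.
  by rewrite powRM ?invr_ge0 ?(ltW t'0) // powR_inv ?(ltW t'0) // mulrCA mulrC.
by rewrite powRM ?invr_ge0 ?(ltW t0) // powR_inv ?(ltW t0) // mulrCA mulrC.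
Qed.

Section constants.
Variables (R : realType) (alpha nu Q : R).
Hypotheses (alpha_gt1 : 1 < alpha) (nu_gt0 : 0 < nu).
Hypotheses (Q_ge1 : 1 <= Q) (Q_lt : Q < 2 `^ ((alpha - 1) / alpha)).

Definition halfroot := 2 `^ (- alpha^-1).
Definition contraction := 2^-1 + (Q - halfroot) `^ alpha.
Definition split_weight := contraction `^ nu^-1.
Definition maximal_const := ((1 - split_weight) `^ nu)^-1.

Let alpha_gt0 : 0 < alpha. Proof. exact: lt_trans alpha_gt1. Qed.

Lemma halfroot_gt0 : 0 < halfroot.
Proof. exact: powR_gt0. Qed.

Lemma halfroot_le1 : halfroot <= 1.
Proof.
rewrite -(powRr0 2) /halfroot; apply: ler_powR; first by rewrite ler1n.
by rewrite oppr_le0 invr_ge0 ltW.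
Qed.

Lemma halfroot_powR : halfroot `^ alpha = 2^-1.
Proof. by rewrite /halfroot -powRrM mulNr mulVf ?gt_eqF // powR_inv1. Qed.

Lemma Q_sub_halfroot_lt : Q - halfroot < halfroot.
Proof.
move: Q_lt; have -> : (alpha - 1) / alpha = 1 + - alpha^-1.
  by rewrite mulrDl mulfV ?gt_eqF // mulN1r.
rewrite powRD ?pnatr_eq0 ?implybT // powRr1 // -/halfroot; lra.
Qed.

Lemma contraction_gt0 : 0 < contraction.
Proof. by rewrite ltr_pwDl ?powR_ge0 ?invr_gt0. Qed.

Lemma contraction_lt1 : contraction < 1.
Proof.
have : (Q - halfroot) `^ alpha < halfroot `^ alpha.
  apply: gt0_ltr_powR => //; last exact: Q_sub_halfroot_lt.
    by rewrite nnegrE subr_ge0 (le_trans halfroot_le1).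
  by rewrite nnegrE ltW ?halfroot_gt0.
rewrite halfroot_powR /contraction; lra.
Qed.

Lemma split_weight_gt0 : 0 < split_weight.
Proof. exact/powR_gt0/contraction_gt0. Qed.

Lemma split_weight_lt1 : split_weight < 1.
Proof.
have -> : (1 : R) = 1 `^ nu^-1 by rewrite powR1.
rewrite /split_weight; apply: gt0_ltr_powR.
- by rewrite invr_gt0.
- by rewrite nnegrE ltW ?contraction_gt0.
- by rewrite nnegrE.
- exact: contraction_lt1.
Qed.

Lemma split_weight_powR : split_weight `^ nu = contraction.
Proof.
by rewrite /split_weight -powRrM mulVf ?gt_eqF // powRr1 // ltW ?contraction_gt0.
Qed.

Lemma maximal_const_gt0 : 0 < maximal_const.
Proof. by rewrite invr_gt0 powR_gt0 // subr_gt0 split_weight_lt1. Qed.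

Lemma maximal_const_step (H x y : R) : x <= H / 2 ->
  y <= (Q - halfroot) `^ alpha * H ->
  (1 - split_weight) / (1 - split_weight) `^ nu * H +
    split_weight / split_weight `^ nu * (maximal_const * x + maximal_const * y)
  <= maximal_const * H.
Proof.
move=> xH yH; set mu := split_weight; set A := maximal_const.
have mu0 := split_weight_gt0; have A0 := maximal_const_gt0.
have xy : mu / mu `^ nu * (x + y) <= mu * H.
  have xyH : x + y <= contraction * H by rewrite /contraction mulrDl; lra.
  rewrite split_weight_powR; apply: le_trans (ler_wpM2l _ xyH) _.
    by rewrite divr_ge0 ?ltW ?contraction_gt0.
  by rewrite mulrA divfK ?gt_eqF ?contraction_gt0.
have := ler_wpM2l (ltW A0) xy; rewrite /A /maximal_const -/mu; lra.
Qed.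

End constants.

Section outer_expectation.
Context d (T : measurableType d) (R : realType) (P : probability T R).
Local Notation OE := (outer_expectation P).

Lemma outer_expectation_le_integral (Y : T -> R) (U : T -> \bar R) :
  measurable_fun setT U -> (forall x, (Y x)%:E <= U x)%E -> (forall x, 0 <= U x)%E ->
  (OE Y <= \int[P]_x U x)%E.
Proof.
move=> mU YU U0; apply: ereal_inf_lbound; exists U => //; split => //; split => //.
right; rewrite (eq_integral (cst 0)) ?integral0 // => x _.
by apply: (ge0_funenegE (D := setT)) => //; rewrite inE.
Qed.

Lemma outer_expectation_ge (Y : T -> R) (M : \bar R) :
  (forall U : T -> \bar R, measurable_fun setT U ->
    (forall w, (Y w)%:E <= U w)%E -> (M <= \int[P]_w U w)%E) -> (M <= OE Y)%E.
Proof. by move=> MU; apply: le_ereal_inf_tmp => _ [U [mU [YU _]] <-]; apply: MU. Qed.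

Lemma le_outer_expectation (Y1 Y2 : T -> R) :
  (forall x, Y1 x <= Y2 x) -> (OE Y1 <= OE Y2)%E.
Proof.
move=> Y12; apply: le_ereal_inf_tmp => _ [U [mU [YU Ui]] <-].
apply: ereal_inf_lbound; exists U => //; split => //; split => // w.
by apply: le_trans (YU w); rewrite lee_fin.
Qed.

Lemma outer_expectation_ge0 (Y : T -> R) : (forall x, 0 <= Y x) -> (0 <= OE Y)%E.
Proof.
move=> Y0; apply: outer_expectation_ge => U mU YU; apply: integral_ge0 => w _.
by apply: le_trans (YU w); rewrite lee_fin.
Qed.

Lemma outer_expectation_le0 (Y : T -> R) : (forall x, Y x <= 0) -> (OE Y <= 0)%E.
Proof.
by move=> Y0; rewrite -(integral0 P setT); apply: outer_expectation_le_integral.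
Qed.

Lemma outer_expectationZ_le (c : R) (Y : T -> R) : 0 < c -> (forall x, 0 <= Y x) ->
  (OE (fun x => c * Y x)%R <= c%:E * OE Y)%E.
Proof.
move=> c0 Y0.
suff : (c^-1%:E * OE (fun x => c * Y x)%R <= OE Y)%E by rewrite lee_pdivrMl.
apply: outer_expectation_ge => U mU YU.
have U0 w : (0 <= U w)%E by apply: le_trans (YU w); rewrite lee_fin.
rewrite lee_pdivrMl // -ge0_integralZl_EFin //; last exact: ltW.
apply: outer_expectation_le_integral => [|w|w]; first exact: measurable_funeM.
- by rewrite EFinM lee_pmul2l ?lte_fin.
- by rewrite mule_ge0 // lee_fin ltW.
Qed.

Lemma outer_expectationD_le (Y1 Y2 : T -> R) :
  (forall x, 0 <= Y1 x) -> (forall x, 0 <= Y2 x) ->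
  (OE (fun x => Y1 x + Y2 x)%R <= OE Y1 + OE Y2)%E.
Proof.
move=> Y10 Y20.
case E1: (OE Y1) (outer_expectation_ge0 Y10) => [r1| |] OE1 //; last first.
  by rewrite addye ?leey // gt_eqF // (lt_le_trans _ (outer_expectation_ge0 Y20)) ?ltNy0.
case E2: (OE Y2) (outer_expectation_ge0 Y20) => [r2| |] OE2 //; last by rewrite addey ?leey.
apply/lee_addgt0Pr => e e0.
have /ereal_inf_lt[_ [U1 [mU1 [YU1 _]] <-] U1lt] : (OE Y1 < (r1 + e / 2)%:E)%E.
  by rewrite E1 lte_fin; lra.
have /ereal_inf_lt[_ [U2 [mU2 [YU2 _]] <-] U2lt] : (OE Y2 < (r2 + e / 2)%:E)%E.
  by rewrite E2 lte_fin; lra.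
have U10 w : (0 <= U1 w)%E by apply: le_trans (YU1 w); rewrite lee_fin.
have U20 w : (0 <= U2 w)%E by apply: le_trans (YU2 w); rewrite lee_fin.
apply: le_trans (@outer_expectation_le_integral _ (U1 \+ U2)%E _ _ _) _.
- exact: emeasurable_funD.
- by move=> w; rewrite EFinD; exact: leeD.
- by move=> w; exact: adde_ge0.
rewrite ge0_integralD //; apply: le_trans (ltW (lteD U1lt U2lt)) _.
by rewrite -!EFinD lee_fin; lra.
Qed.

End outer_expectation.

Section supnorm.
Context (R : realType) (Psi : Type).

Definition bounded_fn (F : Psi -> R) := exists B : R, forall psi, `|F psi| <= B.

Lemma bounded_fn_sum (I : eqType) (s : seq I) (F : I -> Psi -> R) :
  (forall k, k \in s -> bounded_fn (F k)) ->
  bounded_fn (fun psi => \sum_(k <- s) F k psi).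
Proof.
elim: s => [|a s IHs] Fs; first by exists 0 => psi; rewrite big_nil normr0.
have [B1 FB1] := Fs a (mem_head _ _).
have [B2 FB2] := IHs (fun k ks => Fs k (mem_behead (s := a :: s) ks)).
exists (B1 + B2) => psi; rewrite big_cons.
exact: le_trans (ler_normD _ _) (lerD (FB1 psi) (FB2 psi)).
Qed.

Lemma bounded_fn_bigmax (I : eqType) (s : seq I) (F : I -> Psi -> R) :
  (forall k, k \in s -> bounded_fn (F k)) ->
  bounded_fn (fun psi => \big[Num.max/0]_(k <- s) `|F k psi|).
Proof.
elim: s => [|a s IHs] Fs; first by exists 0 => psi; rewrite big_nil normr0.
have [B1 FB1] := Fs a (mem_head _ _).
have [B2 FB2] := IHs (fun k ks => Fs k (mem_behead (s := a :: s) ks)).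
exists (Num.max B1 B2) => psi; rewrite big_cons.
have M0 : 0 <= \big[Num.max/0]_(k <- s) `|F k psi| by apply: bigmax_ge_id.
rewrite ger0_norm; last by rewrite le_max normr_ge0.
have := FB2 psi; rewrite ger0_norm // => MB2.
by rewrite ge_max !le_max FB1 MB2 orbT.
Qed.

Variable nu : R.

Lemma supnorm_pow_le (psi0 : Psi) (F : Psi -> R) (c : R) :
  (forall psi, `|F psi| `^ nu <= c) -> supnorm_pow F nu <= c.
Proof.
move=> Fc; apply: ge_sup; first by exists (`|F psi0| `^ nu), psi0.
by move=> _ [psi _ <-]; apply: Fc.
Qed.

Lemma le_supnorm_pow (F : Psi -> R) (psi : Psi) : 0 <= nu -> bounded_fn F ->
  `|F psi| `^ nu <= supnorm_pow F nu.
Proof.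
move=> nu0 [B FB]; apply: ub_le_sup; last by exists psi.
exists (B `^ nu) => _ [p _ <-]; apply: ge0_ler_powR; rewrite ?nnegrE //.
exact: le_trans (FB p).
Qed.

Lemma supnorm_pow_ge0 (psi0 : Psi) (F : Psi -> R) : 0 <= nu -> bounded_fn F ->
  0 <= supnorm_pow F nu.
Proof. by move=> nu0 bF; apply: le_trans (le_supnorm_pow psi0 nu0 bF); apply: powR_ge0. Qed.

End supnorm.

Section partial_sums.
Context (R : realType) (T Psi : Type) (W : nat -> T -> Psi -> R).
Implicit Types (i j k m : nat) (w : T) (psi : Psi).

Lemma Mmax_ge0 i j w psi : 0 <= Mmax W i j w psi.
Proof. exact: bigmax_ge_id. Qed.

Lemma Mmax_empty i j w psi : (j < i)%N -> Mmax W i j w psi = 0.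
Proof. by move=> ji; rewrite /Mmax big_geq. Qed.

Lemma Ssum_cat i m k w psi : (i <= m.+1)%N -> (m <= k)%N ->
  Ssum W i k w psi = Ssum W i m w psi + Ssum W m.+1 k w psi.
Proof. by move=> im mk; rewrite /Ssum (@big_cat_nat _ _ _ m.+1). Qed.

Lemma normr_Ssum_le_Mmax i k j w psi : (k <= j)%N ->
  `|Ssum W i k w psi| <= Mmax W i j w psi.
Proof.
move=> kj; have [ik|ki] := leqP i k.
  by apply: (le_bigmax_seq _ _ _ (fun k => `|Ssum W i k w psi|)); rewrite ?mem_index_iota ?ik.
by rewrite /Ssum big_geq // normr0 Mmax_ge0.
Qed.

Lemma Mmax_split i m j w psi : (i <= m <= j)%N ->
  Mmax W i j w psi <=
    `|Ssum W i m w psi| + Num.max (Mmax W i m.-1 w psi) (Mmax W m.+1 j w psi).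
Proof.
case/andP=> im mj; rewrite /Mmax big_seq; apply: bigmax_le => [|k].
  by rewrite addr_ge0 // le_max Mmax_ge0.
rewrite mem_index_iota => /andP[ik kj]; have [km|mk] := ltnP k m.
  have km' : (k <= m.-1)%N by lia.
  apply: le_trans (normr_Ssum_le_Mmax i w psi km') _.
  by rewrite -[X in X <= _]add0r lerD // le_max lexx.
rewrite (Ssum_cat w psi (leqW im) mk); apply: le_trans (ler_normD _ _) _.
by rewrite lerD2l le_max normr_Ssum_le_Mmax ?orbT // -ltnS.
Qed.

Variable n : nat.
Hypothesis W_bounded : forall k w, (1 <= k <= n)%N -> bounded_fn (W k w).

Lemma bounded_Ssum i j w : (1 <= i)%N -> (j <= n)%N -> bounded_fn (Ssum W i j w).
Proof.
move=> i1 jn; apply: (bounded_fn_sum (F := fun k => W k w)) => k.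
by rewrite mem_index_iota => kij; apply: W_bounded; lia.
Qed.

Lemma bounded_Mmax i j w : (1 <= i)%N -> (j <= n)%N -> bounded_fn (Mmax W i j w).
Proof.
move=> i1 jn; apply: (bounded_fn_bigmax (F := fun k => Ssum W i k w)) => k.
by rewrite mem_index_iota => kij; apply: bounded_Ssum; lia.
Qed.

End partial_sums.

Lemma exists_split_index (R : realDomainType) (h : nat -> R) (c : R) (L : nat) :
  (0 < L)%N -> h 0%N <= c ->
  exists2 l, (l < L)%N & h l <= c /\ (l.+1 = L \/ c < h l.+1).
Proof.
elim: L => // L IHL _ h0; have [->|L0] := posnP L; first by exists 0%N => //; split=> //; left.
have [l lL [hl [lL1|chl]]] := IHL L0 h0; last by exists l; [exact: ltnW | split=> //; right].
have [hL|hL] := leP (h L) c; first by exists L => //; split=> //; left.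
exists l; first exact: ltnW.
by split=> //; right; rewrite lL1.
Qed.

Lemma split_block_indices i j l : (0 < i)%N -> (l < j.+1 - i)%N ->
  [/\ (i <= i + l <= j)%N, ((i + l).-1.+1 - i = l)%N & (j.+1 - (i + l).+1 = j.+1 - i - l.+1)%N].
Proof. by move=> i1 lL; split; [apply/andP; split|..]; lia. Qed.

Section maximal_inequality.
Context (R : realType) (alpha nu Q : R).
Context (d : measure_display) (T : measurableType d) (P : probability T R).
Context (Psi : Type) (psi0 : Psi) (n : nat) (W : nat -> T -> Psi -> R) (g : nat -> R).
Hypotheses (alpha_gt1 : 1 < alpha) (nu_ge1 : 1 <= nu).
Hypothesis W_bounded : forall k w, (1 <= k <= n)%N -> bounded_fn (W k w).
Hypothesis gS : condS alpha g Q.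
Hypothesis Ssum_bound : forall i j, (1 <= i)%N -> (i <= j)%N -> (j <= n)%N ->
  (outer_expectation P (fun w => supnorm_pow (Ssum W i j w) nu)
     <= (g (j - i + 1)%N `^ alpha)%:E)%E.

Local Notation OE := (outer_expectation P).
Local Notation sumnorm i j := (fun w => supnorm_pow (Ssum W i j w) nu).
Local Notation maxnorm i j := (fun w => supnorm_pow (Mmax W i j w) nu).

Let alpha_gt0 : 0 < alpha. Proof. exact: lt_trans alpha_gt1. Qed.
Let nu_gt0 : 0 < nu. Proof. exact: lt_le_trans nu_ge1. Qed.

(* Condition (S) says nothing about [g 0]: the empty block is bounded by [0]. *)
Definition gpow k := if k is 0 then 0 else g k `^ alpha.

Lemma gpow_ge0 k : 0 <= gpow k.
Proof. by case: k => [|k] //=; apply: powR_ge0. Qed.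

Lemma gpow_le k l : (k <= l)%N -> gpow k <= gpow l.
Proof.
have [_ g0 gmono _] := gS.
case: k => [|k] kl; first exact: gpow_ge0.
by case: l kl => // l kl; apply: ge0_ler_powR; rewrite ?nnegrE ?g0 ?gmono ?ltW.
Qed.

Lemma gpow_complement_le l L : gpow L / 2 < gpow l.+1 ->
  gpow (L - l.+1) <= (Q - halfroot alpha) `^ alpha * gpow L.
Proof.
have [[Q1 Qlt] g0 _ gsub] := gS; set s := halfroot alpha => hL.
case E: (L - l.+1)%N => [|k]; first by rewrite mulr_ge0 ?powR_ge0 ?gpow_ge0.
have lL : (0 < l.+1 < L)%N by rewrite /= -subn_gt0 E.
case: L hL E lL => [|L] hL E lL; first by rewrite sub0n in E.
have gL0 : 0 <= g L.+1 by apply: g0.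
have gl0 : 0 <= g l.+1 by apply: g0.
have gk0 : 0 <= g k.+1 by apply: g0.
have s0 : 0 <= s by apply/ltW/halfroot_gt0.
have sQ : s <= Q := le_trans (halfroot_le1 alpha_gt1) Q1.
have sgL : s * g L.+1 < g l.+1.
  rewrite ltNge; apply/negP => glL; move: hL; rewrite ltNge => /negP; apply => /=.
  rewrite -(halfroot_powR alpha_gt1) -/s -powRM // mulrC.
  by apply: ge0_ler_powR; rewrite ?nnegrE ?mulr_ge0 // ltW.
have := gsub l.+1 L.+1 lL; rewrite E => glk.
rewrite /= -powRM ?subr_ge0 //; apply: (ge0_ler_powR (ltW alpha_gt0)).
- by rewrite nnegrE.
- by rewrite nnegrE mulr_ge0 ?subr_ge0.
- by rewrite mulrBl; lra.
Qed.

Lemma supnorm_Mmax_split (t : R) i m j w : 0 < t -> t < 1 ->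
  (1 <= i)%N -> (i <= m <= j)%N -> (j <= n)%N ->
  supnorm_pow (Mmax W i j w) nu <=
    (1 - t) / (1 - t) `^ nu * supnorm_pow (Ssum W i m w) nu +
    t / t `^ nu * (supnorm_pow (Mmax W i m.-1 w) nu + supnorm_pow (Mmax W m.+1 j w) nu).
Proof.
move=> t0 t1 i1 /andP[im mj] jn; apply: (supnorm_pow_le psi0) => psi.
have M0 a b := Mmax_ge0 W a b w psi.
have le_sup a b : (1 <= a)%N -> (b <= n)%N ->
    Mmax W a b w psi `^ nu <= supnorm_pow (Mmax W a b w) nu.
  move=> a1 bn; rewrite -[X in X `^ _ <= _]ger0_norm //.
  exact: le_supnorm_pow psi (ltW nu_gt0) (bounded_Mmax W_bounded w a1 bn).
set x : R := `|Ssum W i m w psi|.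
set y : R := Num.max (Mmax W i m.-1 w psi) (Mmax W m.+1 j w psi).
have x0 : 0 <= x by apply: normr_ge0.
have y0 : 0 <= y by rewrite le_max M0.
have Mxy : Mmax W i j w psi `^ nu <= (x + y) `^ nu.
  apply: (ge0_ler_powR (ltW nu_gt0)); rewrite ?nnegrE ?addr_ge0 //.
  by apply: Mmax_split; rewrite im.
rewrite ger0_norm ?M0 //; apply: le_trans Mxy _.
apply: le_trans (powR_add_le_weighted nu_ge1 t0 t1 x0 y0) _; apply: lerD.
  apply: ler_wpM2l; first by rewrite divr_ge0 ?powR_ge0 // subr_ge0 ltW.
  exact: le_supnorm_pow psi (ltW nu_gt0) (bounded_Ssum W_bounded w i1 (leq_trans mj jn)).
apply: ler_wpM2l; first by rewrite divr_ge0 ?powR_ge0 // ltW.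
have y_pow : y `^ nu <= Mmax W i m.-1 w psi `^ nu + Mmax W m.+1 j w psi `^ nu.
  by rewrite /y maxEle; case: ifP => _; rewrite ?lerDl ?lerDr powR_ge0.
have mn : (m.-1 <= n)%N := leq_trans (leq_pred m) (leq_trans mj jn).
exact: le_trans y_pow (lerD (le_sup i m.-1 i1 mn) (le_sup m.+1 j isT jn)).
Qed.

Lemma outer_expectation_Mmax_split (t a b c : R) i m j : 0 < t -> t < 1 ->
  (1 <= i)%N -> (i <= m <= j)%N -> (j <= n)%N ->
  (OE (sumnorm i m) <= a%:E)%E -> (OE (maxnorm i m.-1) <= b%:E)%E ->
  (OE (maxnorm m.+1 j) <= c%:E)%E ->
  (OE (maxnorm i j) <= ((1 - t) / (1 - t) `^ nu * a + t / t `^ nu * (b + c))%:E)%E.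
Proof.
move=> t0 t1 i1 /andP[im mj] jn Sa M1b M2c.
have c1_gt0 : 0 < (1 - t) / (1 - t) `^ nu by rewrite divr_gt0 ?powR_gt0 // subr_gt0.
have c2_gt0 : 0 < t / t `^ nu by rewrite divr_gt0 ?powR_gt0.
have nS w : 0 <= supnorm_pow (Ssum W i m w) nu.
  exact: (supnorm_pow_ge0 psi0 (ltW nu_gt0) (bounded_Ssum W_bounded w i1 (leq_trans mj jn))).
have nM a' b' w : (1 <= a')%N -> (b' <= n)%N -> 0 <= supnorm_pow (Mmax W a' b' w) nu.
  by move=> a1 bn; exact: (supnorm_pow_ge0 psi0 (ltW nu_gt0) (bounded_Mmax W_bounded w a1 bn)).
have nM1 w := nM i m.-1 w i1 (leq_trans (leq_pred m) (leq_trans mj jn)).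
have nM2 w := nM m.+1 j w isT jn.
apply: le_trans (le_outer_expectation P (fun w =>
  supnorm_Mmax_split w t0 t1 i1 (introT andP (conj im mj)) jn)) _.
apply: le_trans (outer_expectationD_le P _ _) _.
- by move=> w; rewrite mulr_ge0 // ltW.
- by move=> w; rewrite mulr_ge0 ?addr_ge0 // ltW.
rewrite EFinD; apply: leeD.
  apply: le_trans (outer_expectationZ_le P c1_gt0 nS) _.
  by rewrite [X in (_ <= X)%E]EFinM; apply: lee_wpmul2l; rewrite // lee_fin ltW.
apply: le_trans (outer_expectationZ_le P c2_gt0 (fun w => addr_ge0 (nM1 w) (nM2 w))) _.
rewrite [X in (_ <= X)%E]EFinM; apply: lee_wpmul2l; first by rewrite lee_fin ltW.
by apply: le_trans (outer_expectationD_le P nM1 nM2) _; rewrite EFinD leeD.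
Qed.

Lemma outer_expectation_Mmax_le i j : (1 <= i)%N -> (j <= n)%N ->
  (OE (maxnorm i j) <= (maximal_const alpha nu Q * gpow (j.+1 - i))%:E)%E.
Proof.
have [[Q1 Qlt] _ _ _] := gS.
set A := maximal_const alpha nu Q; set mu := split_weight alpha nu Q.
have mu0 : 0 < mu := split_weight_gt0 alpha nu Q.
have mu1 : mu < 1 := split_weight_lt1 alpha_gt1 nu_gt0 Q1 Qlt.
move=> i1 jn; move Ldef: (j.+1 - i)%N => L.
elim/ltn_ind: L i j i1 jn Ldef => L IH i j i1 jn Ldef.
have [L0|L_gt0] := posnP L.
  rewrite L0 mulr0; apply: outer_expectation_le0 => w; apply: (supnorm_pow_le psi0) => psi.
  have ji : (j < i)%N by rewrite -subn_eq0 Ldef L0.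
  by rewrite Mmax_empty ?normr0 ?powR0 ?gt_eqF.
have gpow0 : gpow 0 <= gpow L / 2 by rewrite divr_ge0 ?gpow_ge0.
have [l lL [hl hl1]] := exists_split_index L_gt0 gpow0.
have lji : (l < j.+1 - i)%N by rewrite Ldef.
have [/andP[im mj] left_len right_len] := split_block_indices i1 lji.
set m := (i + l)%N in im mj left_len right_len *.
have S_le : (OE (sumnorm i m) <= (gpow L)%:E)%E.
  apply: le_trans (Ssum_bound i1 im (leq_trans mj jn)) _.
  by rewrite /m addKn addn1 lee_fin; exact: (gpow_le lL).
have left_le : (OE (maxnorm i m.-1) <= (A * gpow l)%:E)%E.
  exact: IH lL i m.-1 i1 (leq_trans (leq_pred m) (leq_trans mj jn)) left_len.
have right_le : (OE (maxnorm m.+1 j) <= (A * gpow (L - l.+1))%:E)%E.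
  have shorter : (L - l.+1 < L)%N by rewrite ltn_subrL L_gt0.
  by apply: (IH _ shorter m.+1 j isT jn); rewrite right_len Ldef.
apply: le_trans (outer_expectation_Mmax_split mu0 mu1 i1 (introT andP (conj im mj)) jn
  S_le left_le right_le) _.
rewrite lee_fin; apply: maximal_const_step => //.
case: hl1 => [<-|]; last exact: gpow_complement_le.
by rewrite subnn mulr_ge0 ?powR_ge0 ?gpow_ge0.
Qed.

End maximal_inequality.

Theorem proposition2p1 (R : realType) (alpha nu Q : R) :
  1 < alpha -> 1 <= nu ->
  exists A : R,
  forall (d : measure_display) (T : measurableType d) (P : probability T R)
    (Psi : Type) (Psi_ne : Psi) (n : nat) (W : nat -> T -> Psi -> R) (g : nat -> R),
    (* each W_k(omega) lies in l^infty(Psi) *)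
    (forall k w, (1 <= k <= n)%N -> exists B : R, forall psi, `|W k w psi| <= B) ->
    condS alpha g Q ->
    (forall i j, (1 <= i)%N -> (i <= j)%N -> (j <= n)%N ->
       (outer_expectation P (fun w => supnorm_pow (Ssum W i j w) nu)
          <= (g (j - i + 1)%N `^ alpha)%:E)%E) ->
    forall i j, (1 <= i)%N -> (i <= j)%N -> (j <= n)%N ->
       (outer_expectation P (fun w => supnorm_pow (Mmax W i j w) nu)
          <= (A * g (j - i + 1)%N `^ alpha)%:E)%E.
Proof.
move=> alpha_gt1 nu_ge1; exists (maximal_const alpha nu Q).
move=> d T P Psi psi0 n W g W_bounded gS Ssum_bound i j i1 ij jn.
have := outer_expectation_Mmax_le psi0 alpha_gt1 nu_ge1 W_bounded gS Ssum_bound i1 jn.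
by rewrite subSn // addn1.
Qed.
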